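(* In $\mathbf H^{\mathrm{gr}}_N[c_1,\dots,c_{l-1}]$, for each $i=1,\dots,N$, $$\prod_{k=1}^{l}\Big(w_i-\hbar-z_k+\mathbf t\sum_{j>i}s_{ij}\Big)=\sum_{p=0}^{l}\mathbf t^p\sum_{0=k_0<k_1<\dots<k_p\le l}\ \sum_{i=i_0<i_1<\dots<i_p\le N}\ \prod_{r=0}^{p}\ \prod_{k=k_r+1}^{k_{r+1}-1}(w_{i_r}-\hbar-z_k)\cdot s_{i_{p-1},i_p}s_{i_{p-2},i_{p-1}}\cdots s_{i_1,i_2}s_{i_0,i_1},$$ where on the left the factors are multiplied in the order $k=1,\dots,l$ from left to right, on the right $k_{p+1}:=l+1$, and for $p=0$ the product of transpositions is $1$.
   Context: $\mathbf H^{\mathrm{gr}}_N$ is the $\mathbb C[\hbar,\mathbf t]$-algebra generated by $s_1,\dots,s_{N-1}$, $X_1^{\pm1},\dots,X_N^{\pm1}$, $w_1,\dots,w_N$ with relations: the $w_i$ commute pairwise, the $X_i$ commute pairwise, $X_iX_i^{-1}=X_i^{-1}X_i=1$; the $s_i$ satisfy the Coxeter relations of $\mathfrak S_N$ ($s_{ij}$ denotes the transposition $(ij)$); $s_iw_i=w_{i+1}s_i-\mathbf t$, $s_iw_{i+1}=w_is_i+\mathbf t$, $s_iw_j=w_js_i$ ($j\ne i,i+1$); $\sigma X_i^{\pm1}=X_{\sigma(i)}^{\pm1}\sigma$; $[w_i,X_j]=-\mathbf tX_js_{ji}$ ($i>j$), $-\mathbf tX_is_{ij}$ ($i<j$), $[w_i,X_i]=-\hbar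 X_i+\mathbf t\sum_{k<i}X_ks_{ki}+\mathbf t\sum_{k>i}X_is_{ik}$. $\mathbf H^{\mathrm{gr}}_N[c_1,\dots,c_{l-1}]$ is its extension of scalars by indeterminates $c_1,\dots,c_{l-1}$. Here $l\ge1$, $\varepsilon$ is a primitive $l$-th root of unity, and $z_k=-l^{-1}\big((l-k)\hbar+\sum_{m=1}^{l-1}(1+\varepsilon^m+\dots+\varepsilon^{(k-1)m})c_m\big)$ for $k=1,\dots,l$. *)

From HB Require Import structures.
From mathcomp Require Import all_boot all_order all_algebra all_fingroup.
From mathcomp Require Import Rstruct complex.
Set Implicit Arguments. Unset Strict Implicit. Unset Printing Implicit Defensive.
Import Order.TTheory GRing.Theory Num.Theory.
Local Open Scope ring_scope.

Definition Cfield : fieldType := (Rdefinitions.R)[i].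

Definition central (A : nzRingType) (x : A) := forall y : A, x * y = y * x.

(* Indices i = 1..N of the paper are encoded as ordinals i-1 : 'I_N.
   [rho] is the embedding of the group algebra C[S_N] into the algebra:
   rho sigma is the element sigma.  MathComp's product (s * t)%g of
   permutations is "first s, then t", i.e. the composite t o s; hence the
   multiplicativity hypothesis reads rho (s * t) = rho t * rho s, which means
   rho (sigma o tau) = rho sigma * rho tau.  In particular the simple
   reflections s_i = rho (tperm (i-1) i) satisfy the Coxeter relations of S_N,
   and s_{ij} = rho (tperm i j). *)
Definition Hgr_rels (A : algType Cfield) (N : nat) (hb t : A)
  (rho : {perm 'I_N} -> A) (X Xi w : 'I_N -> A) : Prop :=
  [/\
      rho 1%g = 1 /\ (forall s s' : {perm 'I_N}, rho (s * s')%g = rho s' * rho s),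
      (forall i j, w i * w j = w j * w i)
      /\ (forall i j, X i * X j = X j * X i)
      /\ (forall i, X i * Xi i = 1 /\ Xi i * X i = 1),
      (forall i j : 'I_N, val j = (val i).+1 ->
          rho (tperm i j) * w i = w j * rho (tperm i j) - t
       /\ rho (tperm i j) * w j = w i * rho (tperm i j) + t
       /\ (forall k, k != i -> k != j -> rho (tperm i j) * w k = w k * rho (tperm i j))),
      (forall (s : {perm 'I_N}) i, rho s * X i = X (s i) * rho s
                                 /\ rho s * Xi i = Xi (s i) * rho s) &
      (forall i j : 'I_N, (j < i)%N ->
          w i * X j - X j * w i = - (t * X j * rho (tperm j i)))
      /\ (forall i j : 'I_N, (i < j)%N ->
          w i * X j - X j * w i = - (t * X i * rho (tperm i j)))
      /\ (forall i : 'I_N,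
          w i * X i - X i * w i =
            - (hb * X i) + t * (\sum_(k : 'I_N | (k < i)%N) X k * rho (tperm k i))
                         + t * (\sum_(k : 'I_N | (i < k)%N) X i * rho (tperm i k)))].

Definition zk (A : algType Cfield) (l : nat) (eps : Cfield) (hb : A)
  (c : nat -> A) (k : nat) : A :=
  - ((l%:R : Cfield)^-1 *: ((l - k)%:R * hb
       + \sum_(1 <= m < l) (\sum_(j < k) eps ^+ (j * m)) *: c m)).

(* The summand of the right-hand side, for the chains
   0 = k_0 < k_1 < ... < k_p <= l  (k_r = val (ks`_(r-1)) + 1) and
   i = i_0 < i_1 < ... < i_p      (i_r = (i :: is)`_r):
   prod_{r=0}^{p} prod_{k=k_r+1}^{k_{r+1}-1} (w_{i_r} - hb - z_k)
     * s_{i_{p-1} i_p} ... s_{i_0 i_1},  with k_{p+1} = l+1. *)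
Definition rhs_term (A : algType Cfield) (N l : nat) (hb : A) (z : nat -> A)
  (rho : {perm 'I_N} -> A) (w : 'I_N -> A) (i : 'I_N) (p : nat)
  (ks : p.-tuple 'I_l) (is_ : p.-tuple 'I_N) : A :=
  let kk := 0%N :: rcons [seq (val k).+1 | k <- ks] l.+1 in
  let ii := i :: is_ in
  (\prod_(r < p.+1)
     \prod_((nth 0%N kk r).+1 <= k < nth 0%N kk r.+1) (w (nth i ii r) - hb - z k))
  * \prod_(r < p) rho (tperm (nth i ii (p - r.+1)) (nth i ii (p - r))).

From HB Require Import structures.
From mathcomp Require Import all_boot all_order all_algebra all_fingroup.
From mathcomp Require Import Rstruct complex.
Set Implicit Arguments. Unset Strict Implicit. Unset Printing Implicit Defensive.
Import GRing.Theory.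
Local Open Scope ring_scope.

(* Put M_i = w_i + t * sum_(j > i) s_ij.  The relations between the simple
   reflections and the w's give s_m M_k s_m = M_k for k < m and
   s_m M_m s_m = M_(m+1), hence s_ij M_i = M_j s_ij for i < j.  Every factor
   of the left-hand side is M_i plus a central constant, so expanding the
   first factor and moving each s_ij to the right gives the recursion
     L_(l+1)(i) = (w_i - hb - z_1) L'_l(i) + t * sum_(j > i) L'_l(j) s_ij,
   where ' replaces z_k by z_(k+1).  The right-hand side obeys the same
   recursion: a chain with k_1 > 1 has the factor w_i - hb - z_1 in its first
   block, and a chain with k_1 = 1 has an empty first block, so its term is
   the term of the shorter chain starting at i_1, followed by s_(i i_1).
   Only the centrality of hb and of the z_k is used, not their values. *)

Section TupleSums.
Variables (R : nmodType) (T : finType).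

Lemma sum_tuple0 (F : 0.-tuple T -> R) : \sum_(u : 0.-tuple T) F u = F [tuple].
Proof.
rewrite (eq_bigr (fun _ => F [tuple])) => [|u _]; last by rewrite tuple0.
by rewrite sumr_const card_tuple expn0.
Qed.

Lemma sum_tupleS q (F : q.+1.-tuple T -> R) :
  \sum_(u : q.+1.-tuple T) F u = \sum_(x : T) \sum_(u : q.-tuple T) F [tuple of x :: u].
Proof.
rewrite pair_big /= (reindex (fun p : T * q.-tuple T => [tuple of p.1 :: p.2])) //=.
exists (fun u => (thead u, [tuple of behead u])).
  by move=> [x u] _; rewrite theadE; congr pair; apply: val_inj.
by move=> u _; rewrite [RHS]tuple_eta.
Qed.

Lemma sum_tupleS_cond q (P : pred (q.+1.-tuple T)) (F : q.+1.-tuple T -> R) :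
  \sum_(u | P u) F u
  = \sum_(x : T) \sum_(u : q.-tuple T | P [tuple of x :: u]) F [tuple of x :: u].
Proof.
by rewrite big_mkcond sum_tupleS; apply: eq_bigr => x _; rewrite [RHS]big_mkcond.
Qed.

End TupleSums.

Lemma sum_tuple_lift0 (R : nmodType) n p (F : p.-tuple 'I_n.+1 -> R) :
  \sum_(u : p.-tuple 'I_n.+1 | all (fun k => k != ord0) u) F u
  = \sum_(u : p.-tuple 'I_n) F (map_tuple (lift ord0) u).
Proof.
elim: p F => [|p IHp] F.
  by rewrite big_mkcond !sum_tuple0 /=; congr F; apply: val_inj.
rewrite sum_tupleS_cond sum_tupleS big_ord_recl /= big1 ?add0r //.
apply: eq_bigr => x _; rewrite IHp; apply: eq_bigr => u _.
by congr F; apply: val_inj.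
Qed.

Lemma sorted_ltn_mapS (u : seq nat) : sorted ltn (map S u) = sorted ltn u.
Proof. by case: u => //= a u; rewrite path_map. Qed.

Lemma map_val_lift0 n (u : seq 'I_n) :
  [seq val k | k <- map (lift ord0) u] = map S [seq val k | k <- u].
Proof. by rewrite -!map_comp. Qed.

Lemma sorted_ltn_size n (u : seq 'I_n) :
  sorted ltn [seq val k | k <- u] -> (size u <= n)%N.
Proof.
move=> /(sorted_uniq ltn_trans ltnn); rewrite (map_inj_uniq val_inj) => /card_uniqP <-.
by rewrite -[n in (_ <= n)%N]card_ord max_card.
Qed.

Lemma all_ltn0_map_val n (u : seq 'I_n.+1) :
  all (ltn 0) [seq val k | k <- u] = all (fun k => k != ord0) u.
Proof. by rewrite all_map; apply: eq_all => -[[|k] ?]. Qed.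

Section Chains.
Variables (A : algType Cfield) (N : nat) (hb t : A) (rho : {perm 'I_N} -> A) (w : 'I_N -> A).

Lemma rhs_term_lift0 (z : nat -> A) l p (ks : p.-tuple 'I_l) (is_ : p.-tuple 'I_N) i :
  rhs_term hb z rho w i (map_tuple (lift ord0) ks) is_
  = (w i - hb - z 1%N) * rhs_term hb (fun k => z k.+1) rho w i ks is_.
Proof.
rewrite /rhs_term /=.
set s := rcons _ l.+1.
have -> : rcons [seq (nat_of_ord k).+1 | k <- map (lift ord0) ks] l.+2 = map S s.
  by rewrite map_rcons -!map_comp.
have size_s : size s = p.+1 by rewrite size_rcons size_map size_tuple.
have s0_gt0 : (0 < nth 0%N s 0)%N by rewrite /s; case: (tval ks).
rewrite !big_ord_recl /= !mulrA; congr (_ * _ * _).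
  by rewrite (nth_map 0%N) ?size_s // big_ltn ?ltnS // big_add1.
apply: eq_bigr => r _; rewrite !(nth_map 0%N) ?size_s ?ltnS ?(ltnW (ltn_ord r)) //.
by rewrite big_add1.
Qed.

Lemma rhs_term_cons0 (z : nat -> A) l q (ks : q.-tuple 'I_l) (is_ : q.-tuple 'I_N) i i1 :
  rhs_term hb z rho w i [tuple of ord0 :: map_tuple (lift ord0) ks] [tuple of i1 :: is_]
  = rhs_term hb (fun k => z k.+1) rho w i1 ks is_ * rho (tperm i i1).
Proof.
rewrite /rhs_term /=.
set s := rcons _ l.+1.
have -> : rcons [seq (nat_of_ord k).+1 | k <- map (lift ord0) ks] l.+2 = map S s.
  by rewrite map_rcons -!map_comp.
have size_s : size s = q.+1 by rewrite size_rcons size_map size_tuple.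
rewrite big_ord_recl big_geq // mul1r -mulrA; congr (_ * _).
  apply: eq_bigr => r _; rewrite /= add0n (set_nth_default i1 i) /= ?size_tuple //.
  have -> : nth 0%N (1%N :: map S s) r = (nth 0%N (0%N :: s) r).+1.
    by case: r => -[|r] //= r_lt; rewrite (nth_map 0%N) // size_s ltnW.
  by rewrite (nth_map 0%N) ?size_s // big_add1.
rewrite big_ord_recr /= subnn subSn // subnn; congr (_ * _).
apply: eq_bigr => r _; have r_lt := ltn_ord r.
rewrite (subSn r_lt) (subSn (ltnW r_lt)) /=.
by rewrite !(set_nth_default i1 i) //= size_tuple ltnS leq_subr.
Qed.

Definition chain_sum (z : nat -> A) (l : nat) (i : 'I_N) (p : nat) : A :=
  \sum_(ks : p.-tuple 'I_l | sorted ltn [seq val k | k <- ks])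
    \sum_(is_ : p.-tuple 'I_N | sorted ltn [seq val j | j <- i :: is_])
      rhs_term hb z rho w i ks is_.

Lemma chain_sum_gt z l i p : (l < p)%N -> chain_sum z l i p = 0.
Proof.
move=> lp; rewrite /chain_sum big_pred0 // => ks.
by apply/negbTE/negP => /sorted_ltn_size; rewrite size_tuple leqNgt lp.
Qed.

Lemma chain_sum_part_lift z l i p :
  \sum_(ks : p.-tuple 'I_l.+1 | sorted ltn [seq val k | k <- ks]
                                 && all (fun k => k != ord0) ks)
    \sum_(is_ : p.-tuple 'I_N | sorted ltn [seq val j | j <- i :: is_])
      rhs_term hb z rho w i ks is_
  = (w i - hb - z 1%N) * chain_sum (fun k => z k.+1) l i p.
Proof.
rewrite big_andbC big_mkcondr sum_tuple_lift0.
rewrite mulr_sumr [RHS]big_mkcond; apply: eq_bigr => ks _.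
rewrite /= map_val_lift0 sorted_ltn_mapS; case: ifP => _ //.
by rewrite mulr_sumr; apply: eq_bigr => is_ _; apply: rhs_term_lift0.
Qed.

Lemma chain_sum_part_ord0 z l i q :
  \sum_(ks : q.+1.-tuple 'I_l.+1 | sorted ltn [seq val k | k <- ks]
                                   && ~~ all (fun k => k != ord0) ks)
    \sum_(is_ : q.+1.-tuple 'I_N | sorted ltn [seq val j | j <- i :: is_])
      rhs_term hb z rho w i ks is_
  = \sum_(j : 'I_N | (i < j)%N) chain_sum (fun k => z k.+1) l j q * rho (tperm i j).
Proof.
rewrite sum_tupleS_cond big_ord_recl /=.
rewrite [X in _ + X]big1 ?addr0; last first.
  move=> x _; apply: big_pred0 => u /=; apply/negbTE; rewrite negb_and negbK -implybE.
  apply/implyP => /(order_path_min ltn_trans); rewrite -all_ltn0_map_val.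
  by apply: sub_all => k; apply: leq_ltn_trans (leq0n _).
under eq_bigl => u do rewrite andbT (path_sortedE ltn_trans) all_ltn0_map_val.
rewrite big_mkcondr sum_tuple_lift0.
under [RHS]eq_bigr => j _ do rewrite /chain_sum mulr_suml.
rewrite exchange_big /= [RHS]big_mkcond; apply: eq_bigr => ks _.
rewrite map_val_lift0 sorted_ltn_mapS; case: ifP => // _.
rewrite sum_tupleS_cond [RHS]big_mkcond; apply: eq_bigr => j _ /=.
have [ij | ji] := ltnP i j; last by rewrite big_pred0 // => u; rewrite ltnNge ji.
rewrite mulr_suml; apply: eq_big => // u _.
by rewrite -rhs_term_cons0; congr rhs_term; apply: val_inj.
Qed.

Lemma chain_sumS0 z l i :
  chain_sum z l.+1 i 0 = (w i - hb - z 1%N) * chain_sum (fun k => z k.+1) l i 0.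
Proof.
rewrite -chain_sum_part_lift /chain_sum.
rewrite (bigID (fun ks : 0.-tuple 'I_l.+1 => all (fun k => k != ord0) ks)) /=.
by rewrite [X in _ + X]big_pred0 ?addr0 // => ks; rewrite tuple0 andbF.
Qed.

Lemma chain_sumSS z l i q :
  chain_sum z l.+1 i q.+1
  = (w i - hb - z 1%N) * chain_sum (fun k => z k.+1) l i q.+1
    + \sum_(j : 'I_N | (i < j)%N) chain_sum (fun k => z k.+1) l j q * rho (tperm i j).
Proof.
rewrite -chain_sum_part_lift -chain_sum_part_ord0.
by rewrite /chain_sum (bigID (fun ks : q.+1.-tuple 'I_l.+1 => all (fun k => k != ord0) ks)).
Qed.

Definition rhs_sum (z : nat -> A) (l : nat) (i : 'I_N) : A :=
  \sum_(p < l.+1) t ^+ p * chain_sum z l i p.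

Lemma rhs_sum0 z i : rhs_sum z 0 i = 1.
Proof.
rewrite /rhs_sum big_ord1 mul1r /chain_sum big_mkcond sum_tuple0 /= big_mkcond sum_tuple0.
by rewrite /rhs_term /= big_ord1 big_ord0 big_geq // mulr1.
Qed.

Hypothesis ht : central t.

Lemma rhs_sumS z l i :
  rhs_sum z l.+1 i
  = (w i - hb - z 1%N) * rhs_sum (fun k => z k.+1) l i
    + t * \sum_(j : 'I_N | (i < j)%N) rhs_sum (fun k => z k.+1) l j * rho (tperm i j).
Proof.
have tX_central n : central (t ^+ n) by move=> y; apply/esym/commrX/commr_sym/ht.
rewrite /rhs_sum big_ord_recl chain_sumS0 expr0 !mul1r.
under eq_bigr => q _ do rewrite lift0 chain_sumSS mulrDr.
rewrite big_split addrA; congr (_ + _).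
  rewrite big_ord_recr /= [X in _ * (_ * X)]chain_sum_gt // !mulr0 addr0.
  rewrite [in RHS]big_ord_recl expr0 mul1r mulrDr; congr (_ + _).
  by rewrite mulr_sumr; apply: eq_bigr => q _; rewrite lift0 !mulrA tX_central.
rewrite mulr_sumr; under [RHS]eq_bigr => j _ do rewrite mulr_suml mulr_sumr.
rewrite exchange_big; apply: eq_bigr => q _ /=; rewrite mulr_sumr.
by apply: eq_bigr => j _; rewrite exprS !mulrA.
Qed.

End Chains.

Section JucysMurphy.
Variables (A : algType Cfield) (N : nat) (hb t : A) (rho : {perm 'I_N} -> A)
  (X Xi w : 'I_N -> A).
Hypothesis H : Hgr_rels hb t rho X Xi w.
Hypothesis ht : central t.

Definition tail_transp (i : 'I_N) : A := \sum_(j : 'I_N | (i < j)%N) rho (tperm i j).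

Definition jm (i : 'I_N) : A := w i + t * tail_transp i.

Lemma rhoM s s' : rho (s * s')%g = rho s' * rho s.
Proof. by case: H => [[_ ->]]. Qed.

Lemma rho_tpermK (a b : 'I_N) : rho (tperm a b) * rho (tperm a b) = 1.
Proof. by rewrite -rhoM tperm2; case: H => [[]]. Qed.

Lemma rho_tpermJ (a b c d : 'I_N) :
  rho (tperm c d) * rho (tperm a b) * rho (tperm c d)
  = rho (tperm (tperm c d a) (tperm c d b)).
Proof. by rewrite -tpermJ conjgE tpermV !rhoM. Qed.

Lemma tperm_adj_w (m m' : 'I_N) : val m' = (val m).+1 ->
  [/\ rho (tperm m m') * w m = w m' * rho (tperm m m') - t,
      rho (tperm m m') * w m' = w m * rho (tperm m m') + t
    & forall k, k != m -> k != m' -> rho (tperm m m') * w k = w k * rho (tperm m m')].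
Proof. by case: H => _ _ adj _ _ /adj[? []]. Qed.

Lemma conj_tmul (x y : A) : x * (t * y) * x = t * (x * y * x).
Proof. by rewrite mulrA -ht -!mulrA. Qed.

Lemma jm_conj_adj_lt (m m' k : 'I_N) : val m' = (val m).+1 -> (k < m)%N ->
  rho (tperm m m') * jm k * rho (tperm m m') = jm k.
Proof.
move=> m'E km; have [_ _ w_comm] := tperm_adj_w m'E.
have km1 : k != m by rewrite neq_ltn km.
have km2 : k != m' by rewrite neq_ltn m'E ltnS ltnW.
rewrite /jm mulrDr mulrDl w_comm // -mulrA rho_tpermK mulr1; congr (_ + _).
rewrite conj_tmul; congr (_ * _); rewrite /tail_transp mulr_sumr mulr_suml.
have fix_k : tperm m m' k = k by rewrite tpermD // eq_sym.
under eq_bigr => j _ do rewrite rho_tpermJ fix_k.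
rewrite (reindex_inj (@perm_inj _ (tperm m m'))) /=.
under eq_bigr do rewrite tpermK.
by apply: eq_bigl => j; case: tpermP => [->|->|//]; rewrite km m'E ltnS ltnW.
Qed.

Lemma jm_conj_adj (m m' : 'I_N) : val m' = (val m).+1 ->
  rho (tperm m m') * jm m * rho (tperm m m') = jm m'.
Proof.
move=> m'E; have [w_conj _ _] := tperm_adj_w m'E.
rewrite /jm mulrDr mulrDl w_conj mulrBl -(mulrA (w m')) rho_tpermK mulr1.
rewrite conj_tmul -addrA; congr (_ + _).
rewrite -mulrN -mulrDr; congr (_ * _).
rewrite /tail_transp mulr_sumr mulr_suml.
under eq_bigr => j _ do rewrite rho_tpermJ tpermL.
have mm' : (m < m')%N by rewrite m'E.
rewrite (bigD1 m') //= tpermR tpermC addrA addNr add0r.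
apply: eq_big => j.
  case: (eqVneq j m') => [->|ne]; first by rewrite ltnn andbF.
  by rewrite andbT [in RHS]ltn_neqAle -m'E eq_sym ne.
move=> /andP[mj ne]; rewrite tpermD // eq_sym //.
by rewrite neq_ltn mj orbT.
Qed.

Lemma jm_conj (i j : 'I_N) : (i < j)%N ->
  rho (tperm i j) * jm i * rho (tperm i j) = jm j.
Proof.
move=> ij; have [n] : exists n, val j = (i + n.+1)%N
  by exists (j - i).-1; rewrite prednK ?subn_gt0 // subnKC // ltnW.
elim: n j ij => [|n IHn] j ij jE; first by apply: jm_conj_adj; rewrite jE addn1.
have j0_lt : (i + n.+1 < N)%N by rewrite -addnS -jE; exact: ltnW (ltn_ord j).
set j0 := Ordinal j0_lt.
have jE0 : val j = (val j0).+1 by rewrite jE /= addnS.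
have ij0 : (i < j0)%N by rewrite /= addnS ltnS leq_addr.
have -> : tperm i j = (tperm i j0 ^ tperm j0 j)%g.
  by rewrite tpermJ tpermL tpermD // neq_ltn ?ij0 ?ij orbT.
rewrite conjgE tpermV !rhoM.
set s := rho (tperm j0 j); set r := rho (tperm i j0).
have -> : s * r * s * jm i * (s * r * s) = s * (r * (s * jm i * s) * r) * s.
  by rewrite !mulrA.
by rewrite jm_conj_adj_lt // IHn // jm_conj_adj.
Qed.

Lemma tperm_jm (i j : 'I_N) : (i < j)%N -> rho (tperm i j) * jm i = jm j * rho (tperm i j).
Proof. by move=> ij; rewrite -(jm_conj ij) -!mulrA rho_tpermK mulr1. Qed.

Definition lhs_prod (z : nat -> A) (l : nat) (i : 'I_N) : A :=
  \prod_(k < l) (w i - hb - z k.+1 + t * tail_transp i).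

Hypothesis hhb : central hb.

Lemma tperm_lhs_prod z (hz : forall k, central (z k)) l (i j : 'I_N) : (i < j)%N ->
  rho (tperm i j) * lhs_prod z l i = lhs_prod z l j * rho (tperm i j).
Proof.
move=> ij; elim: l => [|l IHl]; first by rewrite /lhs_prod !big_ord0 mul1r mulr1.
rewrite /lhs_prod !big_ord_recr /= mulrA IHl -!mulrA; congr (_ * _).
have jmE m : w m - hb - z l.+1 + t * tail_transp m = jm m + (- hb - z l.+1).
  by rewrite /jm -!addrA; congr (_ + _); rewrite [RHS]addrC addrA.
have c_central : central (- hb - z l.+1).
  by move=> y; rewrite mulrBl mulrBr mulNr mulrN hhb hz.
by rewrite !jmE mulrDr mulrDl tperm_jm // c_central.
Qed.

Lemma lhs_prodS z (hz : forall k, central (z k)) l i :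
  lhs_prod z l.+1 i
  = (w i - hb - z 1%N) * lhs_prod (fun k => z k.+1) l i
    + t * \sum_(j : 'I_N | (i < j)%N) lhs_prod (fun k => z k.+1) l j * rho (tperm i j).
Proof.
rewrite /lhs_prod big_ord_recl mulrDl -mulrA /tail_transp mulr_suml; congr (_ + t * _).
by apply: eq_bigr => j ij; exact: (tperm_lhs_prod (fun k => hz k.+1)).
Qed.

End JucysMurphy.

Lemma lhs_prod_eq_rhs_sum (A : algType Cfield) N (hb t : A) rho (X Xi w : 'I_N -> A)
    (H : Hgr_rels hb t rho X Xi w) (ht : central t) (hhb : central hb)
    l (z : nat -> A) (hz : forall k, central (z k)) (i : 'I_N) :
  lhs_prod hb t rho w z l i = rhs_sum hb t rho w z l i.
Proof.
elim: l z hz i => [|l IHl] z hz i; first by rewrite rhs_sum0 /lhs_prod big_ord0.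
have hz' k : central (z k.+1) by apply: hz.
rewrite (lhs_prodS H) // rhs_sumS // IHl //; congr (_ + t * _).
by apply: eq_bigr => j _; rewrite IHl.
Qed.

Lemma zk_central (A : algType Cfield) l eps (hb : A) (c : nat -> A)
    (hhb : central hb) (hc : forall m, central (c m)) k :
  central (zk l eps hb c k).
Proof.
move=> y; rewrite /zk mulNr mulrN -scalerAl -scalerAr mulrDl mulrDr.
rewrite -mulrA hhb !mulrA mulr_natl mulr_natr mulr_suml mulr_sumr.
by congr (- (_ *: (_ + _))); apply: eq_bigr => m _; rewrite -scalerAl -scalerAr hc.
Qed.

Theorem lemma5p4 (A : algType Cfield) (N l : nat) (hl : (0 < l)%N)
  (eps : Cfield) (heps : l.-primitive_root eps)
  (hb t : A) (c : nat -> A)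
  (hhb : central hb) (ht : central t) (hc : forall m, central (c m))
  (rho : {perm 'I_N} -> A) (X Xi w : 'I_N -> A)
  (H : Hgr_rels hb t rho X Xi w) (i : 'I_N) :
  let z := zk l eps hb c in
  \prod_(k < l) (w i - hb - z k.+1 + t * \sum_(j : 'I_N | (i < j)%N) rho (tperm i j))
  = \sum_(p < l.+1) t ^+ p *
      \sum_(ks : p.-tuple 'I_l | sorted ltn [seq val k | k <- ks])
        \sum_(is_ : p.-tuple 'I_N | sorted ltn [seq val j | j <- i :: is_])
          rhs_term hb z rho w i ks is_.
Proof. exact: lhs_prod_eq_rhs_sum H ht hhb l _ (zk_central l eps hhb hc) i. Qed.
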